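(* Let $\Delta\ge3$. Then $\bar{\mathrm{R}}(\mathrm{R}(\Pi^{\mathsf{orcx}}))=\Pi^{\mathsf{orcx}}$ up to renaming of labels.
   Context: Node-edge-checkable problems $(\Sigma,\mathcal{N},\mathcal{E})$ have a finite label set $\Sigma$, node constraint $\mathcal{N}$ (a set of cardinality-$\Delta$ multisets over $\Sigma$) and edge constraint $\mathcal{E}$ (a set of cardinality-$2$ multisets). Round elimination. $\mathrm{R}(\Pi)$ is defined as follows. - $\mathcal{E}_{\mathrm{R}(\Pi)}$ consists of the configurations $S_1S_2$ of nonempty subsets of $\Sigma_\Pi$ with $L_1L_2\in\mathcal{E}_\Pi$ for all $L_i\in S_i$ that are maximal. Maximal means no other such configuration dominates it via elementwise inclusion up to permutation. - $\Sigma_{\mathrm{R}(\Pi)}$ is the set of sets occurring there. - $\mathcal{N}_{\mathrm{R}(\Pi)}$ consists of the configurations over $\Sigma_{\mathrm{R}(\Pi)}$ admitting a choice in $\mathcal{N}_\Pi$. $\bar{\mathrm{R}}(\Pi)$ is defined dually. - $\mathcal{N}_{\bar{\mathrm{R}}(\Pi)}$ consists of the maximal configurations of nonempty subsets all of whose choices lie in $\mathcal{N}_\Pi$. - $\Sigma_{\bar{\mathrm{R}}(\Pi)}$ is the set of sets occurring there. - $\mathcal{E}_{\bar{\mathrm{R}}(\Pi)}$ consists of the configurations admitting a choice in $\mathcal{E}_\Pi$. $\Pi^{\mathsf{orcx}}$ has labels $\Sigma_1\cup\Sigma_2$ with $\Sigma_1=\{\mathsf O,\mathsf R,\mathsf C,\mathsf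 X\}$ and $\Sigma_2=\{\mathsf o,\mathsf r,\mathsf c,\mathsf x\}$. Its node configurations are the $L_1\dots L_\Delta$ such that: - exactly one $L_k$ lies in $\Sigma_1$; and - there are distinct $k,k'$ with all other $L_{k''}\in\{\mathsf O,\mathsf o\}$, and either ($L_k\in\{\mathsf X,\mathsf x\}$ and $L_{k'}\in\{\mathsf O,\mathsf o\}$) or ($L_k\in\{\mathsf R,\mathsf r\}$ and $L_{k'}\in\{\mathsf C,\mathsf c\}$). Its edge configurations are all configurations in $[\mathsf O]\,[\mathsf O\mathsf R\mathsf C\mathsf X]$, $[\mathsf O\mathsf R]\,[\mathsf O\mathsf R]$, $[\mathsf O\mathsf C]\,[\mathsf O\mathsf C]$, $[\mathsf o]\,[\mathsf o\mathsf r\mathsf c\mathsf x]$ and $[\mathsf o\mathsf r]\,[\mathsf o\mathsf c]$, where $[S]\,[S']$ denotes all pairs with one entry from $S$ and the other from $S'$. *)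

From HB Require Import structures.
From mathcomp Require Import all_boot.

Set Implicit Arguments.
Unset Strict Implicit.
Unset Printing Implicit Defensive.

(* A node-edge-checkable problem with labels in a carrier type T.
   [plab] is the label set Sigma; configurations (multisets) are represented
   by sequences, all constraints below being invariant under permutation.
   [pnode] is the node constraint (configurations of cardinality Delta),
   [pedge] the edge constraint (configurations of cardinality 2). *)
Record problem (T : Type) := Problem {
  plab  : T -> Prop;
  pnode : seq T -> Prop;
  pedge : seq T -> Prop }.

Section RoundElimination.
Variable T : finType.

Definition nonempty_subset_of (lab : T -> Prop) (S : {set T}) : Prop :=
  S != set0 /\ forall x, x \in S -> lab x.

Definition choice_of (s : seq T) (C : seq {set T}) : bool :=
  all2 (fun (x : T) (S : {set T}) => x \in S) s C.

Definition all_choices (P : seq T -> Prop) (C : seq {set T}) : Prop :=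
  forall s, choice_of s C -> P s.

Definition some_choice (P : seq T -> Prop) (C : seq {set T}) : Prop :=
  exists s, choice_of s C /\ P s.

Definition dominated (C C' : seq {set T}) : Prop :=
  exists s, perm_eq s C' /\ all2 (fun A B : {set T} => A \subset B) C s.

Definition admissible (n : nat) (lab : T -> Prop) (P : seq T -> Prop)
    (C : seq {set T}) : Prop :=
  size C = n /\ (forall S, S \in C -> nonempty_subset_of lab S) /\ all_choices P C.

Definition maximal_admissible n lab P (C : seq {set T}) : Prop :=
  admissible n lab P C /\
  forall C', admissible n lab P C' -> dominated C C' -> perm_eq C C'.

Definition over (lab : {set T} -> Prop) (C : seq {set T}) : Prop :=
  forall S, S \in C -> lab S.

Definition RE (Delta : nat) (Pi : problem T) : problem {set T} :=
  let E := maximal_admissible 2 (plab Pi) (pedge Pi) in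
  let L := fun S => exists C, E C /\ S \in C in
  Problem L (fun C => size C = Delta /\ over L C /\ some_choice (pnode Pi) C) E.

Definition REbar (Delta : nat) (Pi : problem T) : problem {set T} :=
  let N := maximal_admissible Delta (plab Pi) (pnode Pi) in
  let L := fun S => exists C, N C /\ S \in C in
  Problem L N (fun C => size C = 2 /\ over L C /\ some_choice (pedge Pi) C).

End RoundElimination.

(* Equality of problems up to renaming of labels: a bijection between the
   label sets that maps the node (resp. edge) constraint exactly onto the
   node (resp. edge) constraint; constraints only use labels of the set. *)
Definition iso_problem (T1 T2 : eqType) (P1 : problem T1) (P2 : problem T2) : Prop :=
  exists (f : T1 -> T2) (g : T2 -> T1),
    (forall a, plab P1 a -> plab P2 (f a)) /\
    (forall b, plab P2 b -> plab P1 (g b)) /\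
    (forall a, plab P1 a -> g (f a) = a) /\
    (forall b, plab P2 b -> f (g b) = b) /\
    (forall s, pnode P1 s -> forall a, a \in s -> plab P1 a) /\
    (forall s, pedge P1 s -> forall a, a \in s -> plab P1 a) /\
    (forall t, pnode P2 t -> forall b, b \in t -> plab P2 b) /\
    (forall t, pedge P2 t -> forall b, b \in t -> plab P2 b) /\
    (forall s, (forall a, a \in s -> plab P1 a) ->
               (pnode P1 s <-> pnode P2 (map f s))) /\
    (forall s, (forall a, a \in s -> plab P1 a) ->
               (pedge P1 s <-> pedge P2 (map f s))).

(* The labels of Pi^orcx: uppercase = Sigma_1, lowercase = Sigma_2 *)
Inductive olab := LO | LR | LC | LX | Lo | Lr | Lc | Lx.

Definition olab_to_ord (l : olab) : 'I_8 :=
  inord match l with LO => 0 | LR => 1 | LC => 2 | LX => 3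
                   | Lo => 4 | Lr => 5 | Lc => 6 | Lx => 7 end.
Definition ord_to_olab (i : 'I_8) : option olab :=
  match val i with 0 => Some LO | 1 => Some LR | 2 => Some LC | 3 => Some LX
                 | 4 => Some Lo | 5 => Some Lr | 6 => Some Lc | 7 => Some Lx
                 | _ => None end.
Lemma olab_pcancel : pcancel olab_to_ord ord_to_olab.
Proof. by case; rewrite /ord_to_olab /olab_to_ord /= inordK. Qed.

HB.instance Definition _ := Finite.copy olab (pcan_type olab_pcancel).

Definition Sigma1 (l : olab) : bool := l \in [:: LO; LR; LC; LX].

Definition orcx_node (Delta : nat) (s : seq olab) : Prop :=
  size s = Delta /\
  count Sigma1 s = 1 /\
  exists k k', [/\ k < Delta, k' < Delta, k != k',
    (forall k'', k'' < Delta -> k'' != k -> k'' != k' ->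
       nth LO s k'' \in [:: LO; Lo]) &
    ((nth LO s k \in [:: LX; Lx]) && (nth LO s k' \in [:: LO; Lo])) ||
    ((nth LO s k \in [:: LR; Lr]) && (nth LO s k' \in [:: LC; Lc]))].

Definition pairs_from (S S' : seq olab) (a b : olab) : bool :=
  ((a \in S) && (b \in S')) || ((b \in S) && (a \in S')).

Definition orcx_edge_pair (a b : olab) : bool :=
  [|| pairs_from [:: LO] [:: LO; LR; LC; LX] a b,
      pairs_from [:: LO; LR] [:: LO; LR] a b,
      pairs_from [:: LO; LC] [:: LO; LC] a b,
      pairs_from [:: Lo] [:: Lo; Lr; Lc; Lx] a b |
      pairs_from [:: Lo; Lr] [:: Lo; Lc] a b].

Definition orcx_edge (s : seq olab) : Prop :=
  exists a b, s = [:: a; b] /\ orcx_edge_pair a b.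

Definition Pi_orcx (Delta : nat) : problem olab :=
  Problem (fun _ => True) (orcx_node Delta) orcx_edge.

From Pilot Require Import Defs.
From mathcomp Require Import all_boot zify.

Set Implicit Arguments.
Unset Strict Implicit.
Unset Printing Implicit Defensive.

(* Order the labels of each case by O < R, C < X, and let [dual] be the antitone
   involution exchanging O with X, o with x and r with c.  The edge constraint of
   Pi^orcx says exactly b <= dual a, so the maximal edge configurations of R(Pi^orcx)
   are the pairs of down-sets rlab a = {x | x <= a} and rlab (dual a).  A node
   configuration of Pi^orcx is one with exactly one uppercase label, exactly one
   label with an R-part (R or X) and exactly one with a C-part (C or X); hence R-labels
   c_1 .. c_Delta have such a choice iff exactly one c_i is uppercase, some c_i
   contains R and some c_j contains C.  Demanding this of every choice forces one
   position holding uppercase R-labels only, the others lowercase ones, one position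
   holding R-labels that contain R and one holding R-labels that contain C; the
   maximal such configurations are the images of the node configurations of Pi^orcx
   under rbar b = {rlab a | b <= a}.  Edges transfer because b2 <= dual b1 iff
   b2 <= dual a for some a >= b1. *)

(** * Sequences, choices and maximal configurations *)

Section SeqFacts.
Variables (T U : Type).

Lemma all2_nthP (r : T -> U -> bool) x0 y0 s t :
  reflect (size s = size t /\ forall i, i < size s -> r (nth x0 s i) (nth y0 t i))
          (all2 r s t).
Proof.
elim: s t => [|x s IH] [|y t] /=; try by constructor=> // [[]].
apply: (iffP andP) => [[rxy /IH [-> H]]|[[sz] H]]; first by split=> // -[|i] //= /H.
by split; [exact: (H 0) | apply/IH; split=> // i /(H i.+1)].
Qed.

Lemma all2_has (r : T -> U -> bool) (p : pred T) (q : pred U) s t :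
  all2 r s t -> (forall x y, r x y -> p x -> q y) -> has p s -> has q t.
Proof.
move=> rst pq; elim: s t rst => [|x s IH] [|y t] //= /andP [rxy rst].
by case/orP=> [/(pq x y rxy) -> //|/(IH t rst) ->]; rewrite orbT.
Qed.

Lemma count_eq1P (p : pred T) x0 s :
  count p s = 1 <->
  exists2 k, k < size s & p (nth x0 s k) /\
             forall i, i < size s -> p (nth x0 s i) -> i = k.
Proof.
have count0P (s' : seq T) :
    count p s' = 0 <-> forall j, j < size s' -> ~~ p (nth x0 s' j).
  split=> [/eqP | H]; last first.
    by apply/eqP; rewrite eqn0Ngt -has_count; apply/(has_nthP x0) => -[j /H /negP].
  rewrite eqn0Ngt -has_count => /(has_nthP x0) H j lt_j.
  by apply/negP => pj; apply: H; exists j.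
elim: s => [|y s IH] /=; first by split=> // -[].
case py: (p y); rewrite ?add1n ?add0n; split.
- move=> [/count0P s0]; exists 0 => //; split=> // -[|i] //= /s0 /negbTE -> //.
- move=> [[|k] _ [_ uniq]]; congr _.+1; apply/count0P => j lt_j; apply/negP => pj.
    by have := uniq j.+1 lt_j pj.
  by have := uniq 0 isT py.
- move=> /IH [k lt_k [pk uniq]]; exists k.+1 => //; split=> // -[|i] //=.
    by rewrite py.
  by move=> lt_i /(uniq i lt_i) ->.
- move=> [[|k] lt_k [pk uniq]] /=; first by rewrite py in pk.
  by apply/IH; exists k => //; split=> // i lt_i pi; have [] := uniq i.+1 lt_i pi.
Qed.

Lemma count_nth_two (p : pred T) x0 s k k' :
  k < size s -> k' < size s -> k != k' ->
  (forall i, i < size s -> i != k -> i != k' -> ~~ p (nth x0 s i)) ->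
  count p s = p (nth x0 s k) + p (nth x0 s k').
Proof.
move=> lt_k lt_k' kk' others.
rewrite -{1}(mkseq_nth x0 s) /mkseq count_map -sum1_count big_mkcond /=.
rewrite (bigD1_seq k) ?mem_iota ?iota_uniq //= big_mkcond /=.
rewrite (bigD1_seq k') ?mem_iota ?iota_uniq //= eq_sym kk' big1_seq ?addn0.
  by case: (p _); case: (p _).
move=> i /andP [ik']; rewrite mem_iota /= => lt_i; case: ifP => // ik.
by rewrite (negbTE (others i lt_i ik ik')).
Qed.

End SeqFacts.

Lemma all2_count_in (T : Type) (U : eqType) (r : T -> U -> bool)
    (p : pred T) (q : pred U) s t :
  all2 r s t -> (forall x y, y \in t -> r x y -> p x = q y) -> count p s = count q t.
Proof.
elim: s t => [|x s IH] [|y t] //= /andP [rxy rst] pq.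
rewrite (pq x y (mem_head _ _) rxy) (IH t rst) // => x' y' y't.
by apply: pq; rewrite inE y't orbT.
Qed.

Lemma count_subpred_eq (T : eqType) (a b : pred T) s :
  {in s, subpred a b} -> count a s = count b s -> {in s, subpred b a}.
Proof.
move=> ab eq_ab x xs bx; apply/negPn/negP => nax.
have split_b : count b s = count a s + count (predI (predC a) b) s.
  rewrite -size_filter -(count_predC a (filter b s)) !count_filter.
  congr (_ + _); apply: eq_in_count => y ys /=.
  by case: (boolP (a y)) => //= /(ab y ys).
have : 0 < count (predI (predC a) b) s.
  by rewrite -has_count; apply/hasP; exists x; rewrite /= ?nax.
by move: eq_ab; rewrite split_b; lia.
Qed.

Lemma perm_eq_pair (T : eqType) (a b : T) s :
  perm_eq [:: a; b] s -> s = [:: a; b] \/ s = [:: b; a].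
Proof.
move=> pab; have := perm_size pab; case: s pab => [|x [|y []]] // pab _.
case/perm_consP: pab => i [u [e /perm_small_eq eu]]; rewrite eu // in e.
case: i e => [|[|i]]; rewrite ?rot0 ?(@rot_oversize _ i.+2) //= => -[-> ->].
all: by [left | right].
Qed.

Section Choices.
Variable T : finType.
Implicit Types (p q : pred T) (c : seq T) (C : seq {set T}).

Lemma choice_size c C : choice_of c C -> size c = size C.
Proof. by elim: c C => [|x c IH] [|S C] //= /andP [_ /IH ->]. Qed.

Lemma choice_has p c C :
  choice_of c C -> has (fun S : {set T} => S \subset p) C -> has p c.
Proof.
elim: c C => [|x c IH] [|S C] //= /andP [xS ch] /orP [/subsetP/(_ x xS) px | hC].
  by apply/orP; left.
by rewrite (IH C ch hC) orbT.
Qed.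

Lemma choice_subset (pT : predType T) (A : pT) c C :
  choice_of c C -> {in C, forall S : {set T}, {subset S <= A}} -> {subset c <= A}.
Proof.
elim: c C => [|x c IH] [|S C] //= /andP [xS ch] sub y.
rewrite inE => /predU1P [->|yc]; first exact: sub (mem_head _ _) _ xS.
by apply: IH ch _ y yc => S' S'C; apply: sub; rewrite inE S'C orbT.
Qed.

Lemma subset_homogeneous p (S : {set T}) x :
  (S \subset p) || (S \subset predC p) -> x \in S -> (S \subset p) = p x.
Proof.
case/orP => sub xS; have := subsetP sub x xS; rewrite unfold_in /= => px.
  by rewrite sub px.
rewrite (negbTE px); apply/negbTE/negP => /subsetP/(_ x xS).
by rewrite unfold_in (negbTE px).
Qed.

Lemma choice_pref q C : {in C, forall S : {set T}, S != set0} ->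
  exists2 c, choice_of c C &
             map q c = map (fun S : {set T} => [exists x in S, q x]) C.
Proof.
elim: C => [|S C IH] ne; first by exists [::].
have [|c ch qc] := IH; first by move=> S' S'C; apply: ne; rewrite inE S'C orbT.
have [x [xS qx]] : exists x, x \in S /\ q x = [exists x in S, q x].
  case: (boolP [exists x in S, q x]) => [/exists_inP [x xS qx]|/exists_inPn nq].
    by exists x.
  have /set0Pn [x xS] := ne S (mem_head _ _).
  by exists x; rewrite xS (negbTE (nq x xS)).
by exists (x :: c); rewrite /= ?xS ?qx ?qc.
Qed.

Variable C : seq {set T}.
Hypothesis neC : {in C, forall S : {set T}, S != set0}.

Lemma all_choices_has p :
  all_choices (has p) C <-> has (fun S : {set T} => S \subset p) C.
Proof.
split=> [all_p | hC c ch]; last exact: choice_has ch hC.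
have [c ch qc] := choice_pref (predC p) neC.
have := all_p c ch; rewrite -[has p c]negbK -all_predC.
have -> : all (predC p) c = all id (map (predC p) c) by rewrite all_map.
rewrite qc all_map -has_predC => /hasP [S SC /exists_inPn nq].
by apply/hasP; exists S => //; apply/subsetP => x /nq /negPn.
Qed.

Lemma all_choices_count1 p :
  all_choices (fun c => count p c = 1) C <->
  count (fun S : {set T} => S \subset p) C = 1 /\
  all (fun S : {set T} => (S \subset p) || (S \subset predC p)) C.
Proof.
split=> [count1 | [cnt hom] c ch]; last first.
  rewrite -cnt; apply: (all2_count_in (q := fun S : {set T} => S \subset p) ch).
  move=> x S SC xS; case: (boolP (S \subset p)) => [/subsetP/(_ x xS) //|nsub].
  by move: (allP hom S SC); rewrite (negbTE nsub) => /subsetP/(_ x xS)/negbTE.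
(* A choice preferring p counts the sets meeting p, one avoiding p counts the
   sets contained in p; both counts are 1, so these sets coincide. *)
have [c1 ch1 e1] := choice_pref p neC.
have [c2 ch2 e2] := choice_pref (predC p) neC.
have cnt_meet : count (fun S : {set T} => [exists x in S, p x]) C = 1.
  by rewrite -(count1 c1 ch1) -[RHS](count_map p id) e1 count_map.
have cnt_sub : count (fun S : {set T} => S \subset p) C = 1.
  rewrite -(count1 c2 ch2).
  have -> : count p c2 = count negb (map (predC p) c2).
    by rewrite count_map; apply: eq_count => x /=; rewrite negbK.
  rewrite e2 count_map; apply: eq_count => S /=; rewrite negb_exists_in.
  by apply/subsetP/forall_inP => H x /H; rewrite /= negbK.
have sub_meet : {in C, subpred (fun S : {set T} => S \subset p)
                                (fun S : {set T} => [exists x in S, p x])}.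
  move=> S SC /subsetP sub; have /set0Pn [x xS] := neC SC.
  by apply/exists_inP; exists x => //; apply: sub.
have meet_sub := count_subpred_eq sub_meet (etrans cnt_sub (esym cnt_meet)).
split=> //; apply/allP => S SC.
case: (boolP (S \subset predC p)) => [|/subsetPn [x xS /negPn px]].
  by rewrite orbT.
by rewrite meet_sub //; apply/exists_inP; exists x.
Qed.

End Choices.

Section Inverse.
Variables (A : finType) (B : eqType) (f : A -> B) (a0 : A).

Definition inv_of (y : B) : A := odflt a0 [pick a | f a == y].

Lemma inv_ofK_in y : y \in codom f -> f (inv_of y) = y.
Proof.
case/codomP => a ->; rewrite /inv_of; case: pickP => [a' /eqP //|/(_ a)].
by rewrite eqxx.
Qed.

Lemma inv_ofK : injective f -> cancel f inv_of.
Proof. by move=> inj_f a; apply: inj_f; rewrite inv_ofK_in ?codom_f. Qed.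

End Inverse.

Section Maximality.
Variable T : finType.

Lemma sumn_card_leqif (C C' : seq {set T}) :
  all2 (fun A B : {set T} => A \subset B) C C' ->
  sumn [seq #|A| | A : {set T} <- C] <= sumn [seq #|B| | B : {set T} <- C']
    ?= iff (C == C').
Proof.
elim: C C' => [|A C IH] [|B C'] //= /andP [AB /IH le_CC'].
by rewrite eqseq_cons; apply: leqif_add le_CC'; apply: subset_leqif_cards.
Qed.

Lemma all2_subset_perm_eq (C C' : seq {set T}) :
  all2 (fun A B : {set T} => A \subset B) C C' -> perm_eq C C' -> C = C'.
Proof.
move=> sub /(perm_map (fun A : {set T} => #|A|))/perm_sumn/eqP.
by rewrite (sumn_card_leqif sub) => /eqP.
Qed.

Variables (n : nat) (lab : T -> Prop) (P : seq T -> Prop).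
Variable canonical : seq {set T} -> Prop.
Let adm := admissible n lab P.
Hypothesis adm_perm : forall C C', perm_eq C C' -> adm C -> adm C'.
Hypothesis canonical_adm : forall C, canonical C -> adm C.
Hypothesis canonical_dominates : forall C, adm C ->
  exists2 C0, canonical C0 & all2 (fun A B : {set T} => A \subset B) C C0.
Hypothesis canonical_max : forall C0 C, canonical C0 -> adm C ->
  all2 (fun A B : {set T} => A \subset B) C0 C -> C = C0.

Lemma maximal_admissibleP C : maximal_admissible n lab P C <-> canonical C.
Proof.
split=> [[aC maxC] | cC].
  have [C0 cC0 sub] := canonical_dominates aC.
  have := maxC C0 (canonical_adm cC0) (ex_intro _ C0 (conj (perm_refl _) sub)).
  by move/(all2_subset_perm_eq sub) => ->.
split=> [|C' aC' [s [ps sub]]]; first exact: canonical_adm.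
have adm_s : adm s by apply: adm_perm aC'; rewrite perm_sym.
by rewrite -(canonical_max cC adm_s sub).
Qed.

End Maximality.

Section Compatibility.
Variables (T : finType) (e : rel T).

Definition compat (A : {set T}) : {set T} := [set x | [forall a in A, e a x]].

Lemma compatP (A : {set T}) x : reflect (forall a, a \in A -> e a x) (x \in compat A).
Proof. by rewrite inE; apply: forall_inP. Qed.

Lemma compat_anti (A B : {set T}) : A \subset B -> compat B \subset compat A.
Proof.
by move/subsetP => AB; apply/subsetP => x /compatP xB; apply/compatP => a /AB /xB.
Qed.

Definition pair_constraint (s : seq T) : Prop := exists a b, s = [:: a; b] /\ e a b.

Lemma admissible_pairP C :
  admissible 2 (fun _ => True) pair_constraint C <->
  exists A B, [/\ C = [:: A; B], A != set0, B != set0 & B \subset compat A].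
Proof.
split=> [[size2 [ne all_e]] | [A [B [-> A0 B0 BA]]]].
  case: C size2 ne all_e => [|A [|B []]] // _ ne all_e.
  have [A0 _] := ne A (mem_head _ _).
  have [B0 _] := ne B (mem_last A [:: B]).
  exists A, B; split=> //; apply/subsetP => b bB; apply/compatP => a aA.
  have [|a' [b' [[-> ->]]] //] := all_e [:: a; b].
  by rewrite /choice_of /= aA bB.
split=> //; split=> [S|]; first by rewrite !inE => /orP [] /eqP ->.
case=> [|a [|b [|? ?]]]; rewrite /choice_of /= ?andbF // => /and3P [aA bB _].
by exists a, b; split=> //; move/subsetP: BA => /(_ b bB) /compatP; apply.
Qed.

Hypothesis e_sym : symmetric e.

Lemma compat_sym (A B : {set T}) : B \subset compat A -> A \subset compat B.
Proof.
move/subsetP => BA; apply/subsetP => a aA; apply/compatP => b /BA /compatP.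
by rewrite e_sym; apply.
Qed.

End Compatibility.

(** * The labels of Pi^orcx *)

(* The equality of [olab] is transported from ['I_8] through [inord] and does not
   reduce by computation; [olab_eqb] is a computable substitute. *)
Definition olab_eqb (a b : olab) : bool :=
  match a, b with
  | LO, LO | LR, LR | LC, LC | LX, LX | Lo, Lo | Lr, Lr | Lc, Lc | Lx, Lx => true
  | _, _ => false
  end.

Lemma olab_eqE a b : (a == b) = olab_eqb a b.
Proof. by case: a; case: b; rewrite /= ?eqxx //; apply/negbTE/eqP. Qed.

Definition olabs := [:: LO; LR; LC; LX; Lo; Lr; Lc; Lx].

Lemma mem_olabs a : a \in olabs.
Proof. by case: a; rewrite !in_cons !olab_eqE. Qed.

Lemma forall_olabE (P : pred olab) : [forall a, P a] = all P olabs.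
Proof. by apply/forallP/allP => [H a _ | H a]; [apply: H | apply/H/mem_olabs]. Qed.

Definition upper (a : olab) : bool :=
  match a with LO | LR | LC | LX => true | _ => false end.
Definition rlike (a : olab) : bool :=
  match a with LR | LX | Lr | Lx => true | _ => false end.
Definition clike (a : olab) : bool :=
  match a with LC | LX | Lc | Lx => true | _ => false end.

Lemma Sigma1E a : Sigma1 a = upper a.
Proof. by case: a; rewrite /Sigma1 !in_cons !olab_eqE. Qed.

Lemma mem_XxE a : (a \in [:: LX; Lx]) = rlike a && clike a.
Proof. by case: a; rewrite !in_cons !olab_eqE. Qed.

Lemma mem_RrE a : (a \in [:: LR; Lr]) = rlike a && ~~ clike a.
Proof. by case: a; rewrite !in_cons !olab_eqE. Qed.

Lemma mem_CcE a : (a \in [:: LC; Lc]) = ~~ rlike a && clike a.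
Proof. by case: a; rewrite !in_cons !olab_eqE. Qed.

Lemma mem_OoE a : (a \in [:: LO; Lo]) = ~~ rlike a && ~~ clike a.
Proof. by case: a; rewrite !in_cons !olab_eqE. Qed.

Definition below (x a : olab) : bool :=
  [&& upper x == upper a, rlike x ==> rlike a & clike x ==> clike a].

Lemma below_refl : reflexive below.
Proof. by move=> a; rewrite /below eqxx !implybb. Qed.

Lemma below_trans : transitive below.
Proof.
move=> a x b /and3P [/eqP ux /implyP rx /implyP cx].
move=> /and3P [/eqP ua /implyP ra /implyP ca]; rewrite /below ux ua eqxx.
by apply/and3P; split=> //; apply/implyP => ?; [apply/ra/rx | apply/ca/cx].
Qed.

Lemma below_anti : antisymmetric below.
Proof. by move=> a b; case: a; case: b. Qed.

Lemma below_upper x a : below x a -> upper x = upper a.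
Proof. by case/and3P => /eqP. Qed.

Lemma below_rlike x a : below x a -> rlike x -> rlike a.
Proof. by case/and3P => _ /implyP. Qed.

Lemma below_clike x a : below x a -> clike x -> clike a.
Proof. by case/and3P => _ _ /implyP. Qed.

Definition dual (a : olab) : olab :=
  match a with
  | LO => LX | LX => LO | LR => LR | LC => LC
  | Lo => Lx | Lx => Lo | Lr => Lc | Lc => Lr
  end.

Lemma dualK : involutive dual.
Proof. by case. Qed.

Lemma dual_below a b : below a b -> below (dual b) (dual a).
Proof. by case: a; case: b. Qed.

Lemma orcx_edge_pairE a b : orcx_edge_pair a b = below b (dual a).
Proof.
by rewrite /orcx_edge_pair /pairs_from !in_cons !in_nil !olab_eqE; case: a; case: b.
Qed.

Lemma orcx_edge_pair_sym : symmetric orcx_edge_pair.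
Proof.
move=> a b; rewrite !orcx_edge_pairE.
by apply/idP/idP => /dual_below; rewrite dualK.
Qed.

Lemma orcx_node_count D t : orcx_node D t ->
  [/\ size t = D, count upper t = 1, count rlike t = 1 & count clike t = 1].
Proof.
rewrite /orcx_node (eq_count Sigma1E) => -[sz [cu [k [k' [lt_k lt_k' kk' others]]]]].
rewrite !mem_XxE !mem_RrE !mem_CcE !mem_OoE => kind; rewrite -sz in lt_k lt_k'.
have two (p : pred olab) : (forall x, p x -> rlike x || clike x) ->
    count p t = p (nth LO t k) + p (nth LO t k').
  move=> p_kind; apply: count_nth_two => // i lt_i ik ik'; apply/negP => /p_kind.
  by move: (others i); rewrite -sz mem_OoE -negb_or => /(_ lt_i ik ik') /negP.
rewrite (two rlike) ?(two clike); try by move=> x ->; rewrite ?orbT.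
by split=> //; move: kind; case: (rlike (nth LO t k)); case: (clike (nth LO t k));
   case: (rlike (nth LO t k')); case: (clike (nth LO t k')).
Qed.

Lemma orcx_node_of_count D t : 1 < D ->
  [/\ size t = D, count upper t = 1, count rlike t = 1 & count clike t = 1] ->
  orcx_node D t.
Proof.
move=> D2 [sz cu /(count_eq1P _ LO) [k lt_k [rk uniq_r]]].
move=> /(count_eq1P _ LO) [k' lt_k' [ck' uniq_c]].
rewrite sz in lt_k lt_k' uniq_r uniq_c.
have outside i : i < D -> i != k -> i != k' -> nth LO t i \in [:: LO; Lo].
  move=> lt_i ik ik'; rewrite mem_OoE; apply/andP; split; apply/negP.
    by move/(uniq_r i lt_i) => eik; rewrite eik eqxx in ik.
  by move/(uniq_c i lt_i) => eik; rewrite eik eqxx in ik'.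
split=> //; split; first by rewrite (eq_count Sigma1E).
have [ekk'|kk'] := eqVneq k k'.
  subst k'; pose j := if k == 0 then 1 else 0.
  have jk : j != k by rewrite /j; case: (k =P 0) => [->|/eqP k0] //; rewrite eq_sym.
  have lt_j : j < D by rewrite /j; case: (k == 0) => //; apply: ltnW.
  exists k, j; split=> // [|i lt_i ik ij|]; first by rewrite eq_sym.
    exact: outside.
  by rewrite mem_XxE rk ck' outside // eq_sym.
exists k, k'; split=> //; rewrite mem_RrE mem_CcE rk ck' andbT /=.
apply/orP; right; apply/andP; split; apply/negP.
  by move/(uniq_c k lt_k) => ekk'; rewrite ekk' eqxx in kk'.
by move/(uniq_r k' lt_k') => ekk'; rewrite ekk' eqxx in kk'.
Qed.

Lemma orcx_nodeE D t : 1 < D ->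
  orcx_node D t <->
  [/\ size t = D, count upper t = 1, count rlike t = 1 & count clike t = 1].
Proof. by move=> D2; split; [apply: orcx_node_count | apply: orcx_node_of_count]. Qed.

Definition lower (a : olab) : olab :=
  match a with LO => Lo | LR => Lr | LC => Lc | LX => Lx | _ => a end.

Definition template (cs : seq bool) (p q : nat) : seq olab :=
  mkseq (fun i => let a := if i == p then (if p == q then LX else LR)
                           else if i == q then LC else LO in
                  if nth false cs i then a else lower a) (size cs).

Lemma nth_template cs p q i : i < size cs ->
  let a := nth LO (template cs p q) i in
  [/\ upper a = nth false cs i, rlike a = (i == p) & clike a = (i == q)].
Proof.
move=> lt_i; rewrite /template nth_mkseq //.
have [->|_] := eqVneq i p; rewrite ?eqxx.
  by case: (p == q); case: (nth false cs p).
by case: (i == q); case: (nth false cs i).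
Qed.

Lemma orcx_node_template cs p q :
  1 < size cs -> count id cs = 1 -> p < size cs -> q < size cs ->
  orcx_node (size cs) (template cs p q).
Proof.
move=> cs2 cs1 lt_p lt_q; apply/orcx_nodeE => //.
have sz : size (template cs p q) = size cs by rewrite size_mkseq.
have one (P : pred olab) j : j < size cs ->
    (forall i, i < size cs -> P (nth LO (template cs p q) i) = (i == j)) ->
    count P (template cs p q) = 1.
  move=> lt_j Pi; apply/(count_eq1P _ LO); exists j; rewrite sz // Pi // eqxx.
  by split=> // i lt_i; rewrite Pi // => /eqP.
have upper_t : map upper (template cs p q) = cs.
  apply: (@eq_from_nth _ false); rewrite size_map ?sz // => i lt_i.
  by rewrite (nth_map LO) ?sz //; case: (nth_template p q lt_i).
split=> //; first by rewrite -cs1 -[in RHS]upper_t count_map.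
  by apply: (one _ p) => // i /(nth_template p q) [].
by apply: (one _ q) => // i /(nth_template p q) [].
Qed.

Lemma orcx_node_mem D b : 1 < D -> exists2 t, orcx_node D t & b \in t.
Proof.
move=> D2.
have [c bc] : exists c,
    [/\ upper b + upper c = 1, rlike b + rlike c = 1 & clike b + clike c = 1].
  by case: b; [exists Lx | exists Lc | exists Lr | exists Lo
              | exists LX | exists LC | exists LR | exists LO].
exists [:: b, c & nseq (D - 2) Lo]; last exact: mem_head.
apply/orcx_nodeE => //=; rewrite size_nseq !count_nseq /= !mul0n !addn0.
by case: bc => -> -> ->; split=> //; lia.
Qed.

(** * R(Pi^orcx) *)

Definition rlab (a : olab) : {set olab} := [set x | below x a].

Lemma mem_rlab x a : (x \in rlab a) = below x a.
Proof. by rewrite inE. Qed.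

Lemma rlab_neq0 a : rlab a != set0.
Proof. by apply/set0Pn; exists a; rewrite mem_rlab below_refl. Qed.

Lemma rlab_inj : injective rlab.
Proof.
move=> a b eab; apply: below_anti; apply/andP; split; rewrite -mem_rlab.
  by rewrite -eab mem_rlab below_refl.
by rewrite eab mem_rlab below_refl.
Qed.

Definition rdec : {set olab} -> olab := inv_of rlab LO.

Lemma rdecK : cancel rlab rdec.
Proof. exact: inv_ofK rlab_inj. Qed.

Lemma rdecK_in y : y \in codom rlab -> rlab (rdec y) = y.
Proof. exact: inv_ofK_in. Qed.

Lemma compat_rlab a : compat orcx_edge_pair (rlab a) = rlab (dual a).
Proof.
apply/setP => x; rewrite mem_rlab; apply/compatP/idP => [|xa b].
  by move/(_ a); rewrite mem_rlab below_refl orcx_edge_pairE; apply.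
by rewrite mem_rlab orcx_edge_pairE => /dual_below; apply: below_trans.
Qed.

(* Finite quantification over [olab] does not reduce (see [olab_eqb]), so the
   subsets of [olab] are enumerated through their indicator bits. *)
Definition compat_bits (v : pred olab) (x : olab) : bool :=
  all (fun a => v a ==> below x (dual a)) olabs.

Definition olab_pred (b1 b2 b3 b4 b5 b6 b7 b8 : bool) : pred olab :=
  fun x => match x with
           | LO => b1 | LR => b2 | LC => b3 | LX => b4
           | Lo => b5 | Lr => b6 | Lc => b7 | Lx => b8
           end.

Definition compat_closed_bits (v : pred olab) : bool :=
  has v olabs ==>
  all (fun x => ~~ compat_bits v x) olabs ||
  has (fun b => all (fun x => compat_bits v x == below x b) olabs) olabs.

Lemma compat_bits_check b1 b2 b3 b4 b5 b6 b7 b8 :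
  compat_closed_bits (olab_pred b1 b2 b3 b4 b5 b6 b7 b8).
Proof. by move: b1 b2 b3 b4 b5 b6 b7 b8; do 8 case. Qed.

Lemma compat_set0_or_rlab (B : {set olab}) : B != set0 ->
  compat orcx_edge_pair B = set0 \/ exists b, compat orcx_edge_pair B = rlab b.
Proof.
move=> /set0Pn [y yB].
set v := olab_pred (LO \in B) (LR \in B) (LC \in B) (LX \in B)
                   (Lo \in B) (Lr \in B) (Lc \in B) (Lx \in B).
have vB : v =1 mem B by case.
have bitsE x : compat_bits v x = (x \in compat orcx_edge_pair B).
  by rewrite inE forall_olabE; apply: eq_all => a; rewrite vB orcx_edge_pairE.
have := compat_bits_check (LO \in B) (LR \in B) (LC \in B) (LX \in B)
                          (Lo \in B) (Lr \in B) (Lc \in B) (Lx \in B).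
rewrite -/v /compat_closed_bits; have -> : has v olabs.
  by apply/hasP; exists y; rewrite ?mem_olabs ?vB.
rewrite implyTb => /orP [/allP none | /hasP [b _ /allP full]]; [left | right; exists b].
  by apply/setP => x; rewrite in_set0 -bitsE; apply/negbTE/none/mem_olabs.
by apply/setP => x; rewrite mem_rlab -bitsE; apply/eqP/full/mem_olabs.
Qed.

Lemma RE_edgeP D C :
  pedge (RE D (Pi_orcx D)) C <-> exists a, C = [:: rlab a; rlab (dual a)].
Proof.
have sym := compat_sym orcx_edge_pair_sym.
apply: (maximal_admissibleP
         (canonical := fun C => exists a, C = [:: rlab a; rlab (dual a)]))
  => [C1 C2 | _ [a ->] | C1 | _ C1 [a ->]].
- move=> p12 /admissible_pairP [A [B [eC A0 B0 BA]]]; apply/admissible_pairP.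
  move: p12; rewrite eC => /perm_eq_pair [->|->]; [exists A, B | exists B, A].
    by split.
  by split=> //; apply: sym.
- apply/admissible_pairP; exists (rlab a), (rlab (dual a)).
  by rewrite !rlab_neq0 compat_rlab subxx.
- case/admissible_pairP => [A [B [-> A0 B0 BA]]].
  have [B_incompat | [b Bb]] := compat_set0_or_rlab B0.
    by move: A0 (sym _ _ BA); rewrite B_incompat subset0 => /negP.
  exists [:: rlab b; rlab (dual b)]; first by exists b.
  by rewrite /= -compat_rlab -Bb (sym _ _ BA) (sym _ _ (subxx _)).
- case/admissible_pairP => [A [B [-> _ _ BA]]] /and3P [aA daB _].
  have eB : B = rlab (dual a).
    apply/eqP; rewrite eqEsubset daB andbT -compat_rlab.
    exact: subset_trans BA (compat_anti _ aA).
  congr [:: _; _] => //; apply/eqP; rewrite eqEsubset aA andbT.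
  by rewrite -(dualK a) -compat_rlab -eB; apply: sym.
Qed.

Lemma RE_labP D y : plab (RE D (Pi_orcx D)) y <-> y \in codom rlab.
Proof.
split=> [[C [/RE_edgeP [a ->]]] | /codomP [a ->]].
  by rewrite !inE => /orP [] /eqP ->; apply: codom_f.
exists [:: rlab a; rlab (dual a)]; split; last exact: mem_head.
by apply/RE_edgeP; exists a.
Qed.

Lemma choice_rlab t w : choice_of t (map rlab w) = all2 below t w.
Proof. by elim: t w => [|x t IH] [|a w] //=; rewrite mem_rlab IH. Qed.

Lemma some_choice_rlab D w : 1 < D ->
  some_choice (orcx_node D) (map rlab w) <->
  [/\ size w = D, count upper w = 1, has rlike w & has clike w].
Proof.
move=> D2; split=> [[t [ch /orcx_node_count [szt cu cr cc]]] | [sz cu hr hc]].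
  have sz := choice_size ch; rewrite choice_rlab in ch.
  rewrite size_map szt in sz; split=> //.
  - by rewrite -cu; apply/esym/(all2_count_in ch) => x a _ /below_upper.
  - by apply: (all2_has ch below_rlike); rewrite has_count cr.
  - by apply: (all2_has ch below_clike); rewrite has_count cc.
set p := find rlike w; set q := find clike w.
have lt_p : p < D by rewrite -sz -has_find.
have lt_q : q < D by rewrite -sz -has_find.
exists (template (map upper w) p q); split.
  rewrite choice_rlab; apply/(all2_nthP _ LO LO); rewrite size_mkseq !size_map.
  split=> // i lt_i; have lt_i' : i < size (map upper w) by rewrite size_map.
  have [ut rt ct] := nth_template p q lt_i'.
  rewrite /below ut (nth_map LO) // eqxx rt ct /=.
  by apply/andP; split; apply/implyP => /eqP ->; apply: nth_find.
have := @orcx_node_template (map upper w) p q; rewrite size_map sz.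
by apply; rewrite ?size_map ?count_map ?sz.
Qed.

Lemma RE_nodeP D c : 1 < D -> {subset c <= codom rlab} ->
  pnode (RE D (Pi_orcx D)) c <->
  [/\ size c = D, count (upper \o rdec) c = 1,
      has (rlike \o rdec) c & has (clike \o rdec) c].
Proof.
move=> D2 c_lab.
have ec : c = map rlab (map rdec c).
  by rewrite -map_comp map_id_in // => y /c_lab /rdecK_in.
have lab_c : Defs.over (plab (RE D (Pi_orcx D))) c by move=> y /c_lab /RE_labP.
rewrite /= [in some_choice _ c]ec.
split=> [[sz [_ /(some_choice_rlab _ D2)]] | [sz cu hr hc]].
  by rewrite size_map count_map !has_map.
split=> //; split=> //; apply/(some_choice_rlab _ D2).
by rewrite size_map count_map !has_map.
Qed.

(** * Rbar(R(Pi^orcx)) *)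

Definition REbar_shape D (C : seq {set {set olab}}) : Prop :=
  [/\ size C = D,
      {in C, forall S : {set {set olab}}, S != set0 /\ S \subset codom rlab},
      count (fun S : {set {set olab}} => S \subset upper \o rdec) C = 1 /\
      all (fun S : {set {set olab}} =>
             (S \subset upper \o rdec) || (S \subset predC (upper \o rdec))) C,
      has (fun S : {set {set olab}} => S \subset rlike \o rdec) C &
      has (fun S : {set {set olab}} => S \subset clike \o rdec) C].

Lemma REbar_shape_perm D C C' :
  perm_eq C C' -> REbar_shape D C -> REbar_shape D C'.
Proof.
move=> pCC' [sz ne [cu hom] hr hc]; split.
- by rewrite -(perm_size pCC').
- by move=> S; rewrite -(perm_mem pCC'); apply: ne.
- by rewrite -(permP pCC') -(perm_all _ pCC').
- by rewrite -(perm_has _ pCC').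
- by rewrite -(perm_has _ pCC').
Qed.

Lemma REbar_admissibleP D C : 1 < D ->
  admissible D (plab (RE D (Pi_orcx D))) (pnode (RE D (Pi_orcx D))) C <->
  REbar_shape D C.
Proof.
move=> D2.
have labE S : nonempty_subset_of (plab (RE D (Pi_orcx D))) S <->
              S != set0 /\ S \subset codom rlab.
  split=> [[S0 lab] | [S0 /subsetP lab]]; split=> //.
    by apply/subsetP => y /lab /RE_labP.
  by move=> y /lab /RE_labP.
split=> [[sz [ne ch]] | [sz ne cnt hr hc]].
  have {}ne : {in C, forall S, S != set0 /\ S \subset codom rlab}.
    by move=> S /ne /labE.
  have neC : {in C, forall S : {set {set olab}}, S != set0} by move=> S /ne [].
  have shape c : choice_of c C ->
      [/\ size c = D, count (upper \o rdec) c = 1,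
          has (rlike \o rdec) c & has (clike \o rdec) c].
    move=> chc; apply/RE_nodeP; [exact: D2 | | exact: ch].
    by apply: choice_subset chc _ => S /ne [_ /subsetP].
  split=> //.
  - by apply/all_choices_count1 => // c /shape [].
  - by apply/all_choices_has => // c /shape [].
  - by apply/all_choices_has => // c /shape [].
have neC : {in C, forall S : {set {set olab}}, S != set0} by move=> S /ne [].
split=> //; split=> [S /ne /labE // | c chc].
apply/RE_nodeP => //; first by apply: choice_subset chc _ => S /ne [_ /subsetP].
split; first by rewrite (choice_size chc).
- by move/all_choices_count1: cnt; apply.
- by move/all_choices_has: hr; apply.
- by move/all_choices_has: hc; apply.
Qed.

Definition rbar (b : olab) : {set {set olab}} := rlab @: [set a | below b a].

Lemma mem_rbar a b : (rlab a \in rbar b) = below b a.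
Proof. by rewrite mem_imset ?inE //; apply: rlab_inj. Qed.

Lemma rbar_inj : injective rbar.
Proof.
move=> a b eab; apply: below_anti; apply/andP; split; rewrite -mem_rbar.
  by rewrite eab mem_rbar below_refl.
by rewrite -eab mem_rbar below_refl.
Qed.

Lemma rbar_subset (P : pred olab) b :
  (forall a, below b a -> P b -> P a) -> (rbar b \subset P \o rdec) = P b.
Proof.
move=> P_up; apply/subsetP/idP => [sub | Pb y /imsetP [a]].
  by have := sub (rlab b); rewrite mem_rbar below_refl unfold_in /= rdecK; apply.
by rewrite inE => ba ->; rewrite unfold_in /= rdecK; apply: P_up.
Qed.

Lemma REbar_shape_rbar D t : orcx_node D t -> REbar_shape D (map rbar t).
Proof.
move=> /orcx_node_count [sz cu cr cc].
have upperE b : (rbar b \subset upper \o rdec) = upper b.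
  by apply: rbar_subset => a /below_upper ->.
have lowerE b : (rbar b \subset predC (upper \o rdec)) = ~~ upper b.
  rewrite -(rbar_subset (P := fun a => ~~ upper a)); last first.
    by move=> a /below_upper ->.
  by apply: eq_subset_r => y; rewrite !unfold_in.
split.
- by rewrite size_map.
- move=> S /mapP [b _ ->]; split.
    by apply/set0Pn; exists (rlab b); rewrite mem_rbar below_refl.
  by apply/subsetP => y /imsetP [a _ ->]; apply: codom_f.
- split; first by rewrite -cu count_map; apply: eq_count => b /=; rewrite upperE.
  by rewrite all_map; apply/allP => b _ /=; rewrite upperE lowerE orbN.
- rewrite has_map (@eq_has _ _ rlike) ?has_count ?cr // => b /=.
  by apply: rbar_subset => a /below_rlike.
- rewrite has_map (@eq_has _ _ clike) ?has_count ?cc // => b /=.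
  by apply: rbar_subset => a /below_clike.
Qed.

Lemma REbar_shape_dominated D C : 1 < D -> REbar_shape D C ->
  exists2 t, orcx_node D t &
             all2 (fun A B : {set {set olab}} => A \subset B) C (map rbar t).
Proof.
move=> D2 [sz ne [cu hom] hr hc].
set cs := map (fun S : {set {set olab}} => S \subset upper \o rdec) C.
set p := find (fun S : {set {set olab}} => S \subset rlike \o rdec) C.
set q := find (fun S : {set {set olab}} => S \subset clike \o rdec) C.
have size_cs : size cs = D by rewrite size_map.
exists (template cs p q).
  rewrite -size_cs; apply: orcx_node_template; rewrite ?size_cs ?count_map //.
    by rewrite -sz -has_find.
  by rewrite -sz -has_find.
apply/(all2_nthP _ set0 (rbar LO)); rewrite size_map size_mkseq size_cs.
split=> // i lt_i; have lt_i' : i < size cs by rewrite size_cs -sz.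
have [ut rt ct] := nth_template p q lt_i'.
have SiC : nth set0 C i \in C by apply: mem_nth.
rewrite (nth_map LO) ?size_mkseq //; apply/subsetP => y yS.
have [_ /subsetP /(_ y yS) /codomP [a eya]] := ne _ SiC; rewrite eya in yS *.
rewrite mem_rbar /below ut (nth_map set0) // (subset_homogeneous (allP hom _ SiC) yS).
rewrite /= rdecK eqxx rt ct /=.
apply/andP; split; apply/implyP => /eqP ei; rewrite ei in yS.
  by move/subsetP: (nth_find set0 hr) => /(_ _ yS); rewrite unfold_in /= rdecK.
by move/subsetP: (nth_find set0 hc) => /(_ _ yS); rewrite unfold_in /= rdecK.
Qed.

Lemma REbar_shape_max D t C : orcx_node D t -> REbar_shape D C ->
  all2 (fun A B : {set {set olab}} => A \subset B) (map rbar t) C -> C = map rbar t.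
Proof.
move=> /orcx_node_count [szt _ cr cc] [sz ne [_ hom] hr hc].
move=> /(all2_nthP _ (rbar LO) set0) [_ sub].
have sub_i i : i < D -> rbar (nth LO t i) \subset nth set0 C i.
  move=> lt_i; rewrite -(nth_map LO (rbar LO)) ?szt //.
  by apply: sub; rewrite size_map szt.
have self_i i : i < D -> rlab (nth LO t i) \in nth set0 C i.
  by move=> lt_i; apply: (subsetP (sub_i i lt_i)); rewrite mem_rbar below_refl.
have forced (P : pred olab) : count P t = 1 ->
    has (fun S : {set {set olab}} => S \subset P \o rdec) C ->
    forall i, i < D -> P (nth LO t i) -> nth set0 C i \subset P \o rdec.
  move=> /(count_eq1P _ LO) [k _ [_ uniq]] /(has_nthP set0) [j lt_j Cj] i lt_i Pi.
  rewrite sz in lt_j; rewrite szt in uniq.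
  have Pj : P (nth LO t j).
    by move/subsetP: Cj => /(_ _ (self_i j lt_j)); rewrite unfold_in /= rdecK.
  by rewrite (uniq i lt_i Pi) -(uniq j lt_j Pj).
apply: (@eq_from_nth _ set0); first by rewrite size_map szt sz.
move=> i; rewrite sz => lt_i; rewrite (nth_map LO) ?szt //.
apply/eqP; rewrite eqEsubset sub_i // andbT; apply/subsetP => y yS.
have SiC : nth set0 C i \in C by apply: mem_nth; rewrite sz.
have [_ /subsetP /(_ y yS) /codomP [a eya]] := ne _ SiC; rewrite eya in yS *.
rewrite mem_rbar; apply/and3P; split.
- have hS := allP hom _ SiC.
  have := subset_homogeneous hS (self_i i lt_i); have := subset_homogeneous hS yS.
  by rewrite /= !rdecK => <- <-.
- apply/implyP => /(forced _ cr hr i lt_i) /subsetP /(_ _ yS).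
  by rewrite unfold_in /= rdecK.
- apply/implyP => /(forced _ cc hc i lt_i) /subsetP /(_ _ yS).
  by rewrite unfold_in /= rdecK.
Qed.

Lemma REbar_nodeP D C : 1 < D ->
  pnode (REbar D (RE D (Pi_orcx D))) C <->
  exists2 t, orcx_node D t & C = map rbar t.
Proof.
move=> D2; apply: (maximal_admissibleP
  (canonical := fun C => exists2 t, orcx_node D t & C = map rbar t))
  => [C1 C2 p12 | _ [t node ->] | C1 | _ C1 [t node ->]].
- by move/(REbar_admissibleP _ D2)/(REbar_shape_perm p12)/(REbar_admissibleP _ D2).
- exact/(REbar_admissibleP _ D2)/REbar_shape_rbar.
- case/(REbar_admissibleP _ D2)/(REbar_shape_dominated D2) => t node sub.
  by exists (map rbar t); first exists t.
- by move/(REbar_admissibleP _ D2); apply: REbar_shape_max.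
Qed.

Lemma REbar_nodeE D t : 1 < D ->
  pnode (REbar D (RE D (Pi_orcx D))) (map rbar t) <-> orcx_node D t.
Proof.
move=> D2; split=> [/(REbar_nodeP _ D2) [t' node /(inj_map rbar_inj) ->] // | node].
by apply/(REbar_nodeP _ D2); exists t.
Qed.

Lemma REbar_labP D S : 1 < D ->
  plab (REbar D (RE D (Pi_orcx D))) S <-> exists b, S = rbar b.
Proof.
move=> D2; split=> [[C [/(REbar_nodeP _ D2) [t _ ->] /mapP [b _ ->]]] | [b ->]].
  by exists b.
have [t node bt] := orcx_node_mem b D2.
by exists (map rbar t); split; [apply/(REbar_nodeE _ D2) | apply: map_f].
Qed.

Lemma REbar_edgeE D t : 1 < D ->
  pedge (REbar D (RE D (Pi_orcx D))) (map rbar t) <-> orcx_edge t.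
Proof.
move=> D2; split=> [[sz [_ [c [ch /RE_edgeP [a ec]]]]] | [b1 [b2 [-> e12]]]].
  case: t sz ch => [|b1 [|b2 []]] // _; rewrite ec /choice_of /= !mem_rbar andbT.
  case/andP => b1a b2a; exists b1, b2; split=> //.
  by rewrite orcx_edge_pairE (below_trans b2a) // dual_below.
split=> //; split=> [S /mapP [b _ ->] | ].
  by apply/(REbar_labP _ D2); exists b.
exists [:: rlab b1; rlab (dual b1)]; split; last by apply/RE_edgeP; exists b1.
by rewrite /choice_of /= !mem_rbar below_refl -orcx_edge_pairE e12.
Qed.

Theorem mainTheorem18 (Delta : nat) :
  3 <= Delta ->
  iso_problem (REbar Delta (RE Delta (Pi_orcx Delta))) (Pi_orcx Delta).
Proof.
move=> D3; have D2 : 1 < Delta := ltnW D3.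
set P := REbar _ _.
pose unrbar := inv_of rbar LO.
have unrbarK : cancel rbar unrbar := inv_ofK LO rbar_inj.
have rbarK S : plab P S -> rbar (unrbar S) = S.
  by case/(REbar_labP _ D2) => b ->; rewrite unrbarK.
have mapK s : (forall S, S \in s -> plab P S) -> s = map rbar (map unrbar s).
  by move=> s_lab; rewrite -map_comp map_id_in // => S /s_lab /rbarK.
exists unrbar, rbar.
split=> [//|]; split=> [b _|]; first by apply/(REbar_labP _ D2); exists b.
split=> [S /rbarK //|]; split=> [b _|]; first exact: unrbarK.
split=> [s node S Ss|]; first by exists s.
split=> [s [_ [lab _]] S /lab //|].
split=> [//|]; split=> [//|].
split=> s /mapK {1}->; [exact: REbar_nodeE | exact: REbar_edgeE].
Qed.
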